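(* Let $D\ge 1$. If there is a $\bar{D}$-separable block design (multiset) $\mathcal{F}$ with $N$ blocks on vertex set $[T]$, then there exists a $(T,N,D)$-tropical code within maximum delay $0$; namely, with a bijection $j:\mathcal{F}\to[N]$, the matrix $S_{t,j(B)}=0$ if $t\in B$ and $S_{t,j(B)}=\infty$ if $t\notin B$ is such a code.
   Context: Tropical arithmetic on $\mathbb{R}\cup\{\infty\}$: $x\oplus y=\min(x,y)$, $x\odot y=x+y$, with $x\oplus\infty=x$ and $x\odot\infty=\infty$. For a matrix $S$ with $T$ rows and $N$ columns and a column vector $\mathbf{x}$ of length $N$, $S\odot\mathbf{x}$ is the vector whose $t$-th entry is $\min_{j}(S_{tj}+x_j)$. A $(T,N,D)$-tropical code is a matrix $S\in(\{0\}\cup\mathbb{N}\cup\{\infty\})^{T\times N}$ such that for any two distinct vectors $\mathbf{x},\mathbf{y}\in(\{0\}\cup\mathbb{N}\cup\{\infty\})^{N}$, each having at most $D$ finite entries, $S\odot\mathbf{x}\ne S\odot\mathbf{y}$. It is within maximum delay $\ell$ if $S\in\{0,1,\dots,\ell,\infty\}^{T\times N}$. A block design here is a multiset $\mathcal{F}$ of subsets of $[T]$ whose elements (blocks) are individually indexed; it is $\bar{D}$-separable if for any two different subcollections $\{Z_1,\dots,Z_r\}\ne\{B_1,\dots,B_s\}$ of at most $D$ blocks each (different as collections of indexed blocks, $r,s\le D$), $Z_1\cup\dots\cup Z_r\ne B_1\cup\dots\cup B_s$. *)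

From mathcomp Require Import all_boot.
Set Implicit Arguments. Unset Strict Implicit. Unset Printing Implicit Defensive.

(* Tropical semiring on {0} ∪ N ∪ {∞}: [Some n] = n, [None] = ∞. *)
Definition trop := option nat.

Definition tplus (x y : trop) : trop :=
  match x, y with
  | None, _ => y
  | _, None => x
  | Some a, Some b => Some (minn a b)
  end.

Definition ttimes (x y : trop) : trop :=
  match x, y with
  | Some a, Some b => Some (a + b)
  | _, _ => None
  end.

Definition tmatvec (T N : nat) (S : 'I_T -> 'I_N -> trop)
  (x : {ffun 'I_N -> trop}) : {ffun 'I_T -> trop} :=
  [ffun t => \big[tplus/None]_(j < N) ttimes (S t j) (x j)].

Definition at_most_finite (N D : nat) (x : {ffun 'I_N -> trop}) : Prop :=
  #|[set j | x j != None]| <= D.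

Definition tropical_code (T N D : nat) (S : 'I_T -> 'I_N -> trop) : Prop :=
  forall x y : {ffun 'I_N -> trop},
    at_most_finite D x -> at_most_finite D y -> x <> y ->
    tmatvec S x <> tmatvec S y.

Definition within_delay (T N l : nat) (S : 'I_T -> 'I_N -> trop) : Prop :=
  forall t j, match S t j with Some k => k <= l | None => true end.

(* A block design with N individually indexed blocks on [T]: block i is F i.
   D-bar-separable: distinct subcollections (sets of block indices) of size
   at most D have distinct unions. *)
Definition separable (T N D : nat) (F : 'I_N -> {set 'I_T}) : Prop :=
  forall A B : {set 'I_N}, #|A| <= D -> #|B| <= D -> A != B ->
    \bigcup_(i in A) F i != \bigcup_(i in B) F i.

Definition design_matrix (T N : nat) (F : 'I_N -> {set 'I_T}) :
  'I_T -> 'I_N -> trop :=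
  fun t j => if t \in F j then Some 0 else None.

From mathcomp Require Import all_boot.
Set Implicit Arguments. Unset Strict Implicit. Unset Printing Implicit Defensive.

(* A tropical vector x is determined by its sublevel sets {i | x i <= v}.
   For the design matrix, the sublevel set of S ⊙ x at level v is the union
   of the blocks indexed by the sublevel set of x at level v, and that index
   set has at most D elements when x has at most D finite entries.  So if
   S ⊙ x = S ⊙ y, separability forces x and y to have the same sublevel sets
   at every level, hence x = y. *)

Definition trop_leq (a : trop) (v : nat) : bool :=
  if a is Some n then n <= v else false.

Lemma trop_leq_plus (a b : trop) (v : nat) :
  trop_leq (tplus a b) v = trop_leq a v || trop_leq b v.
Proof.
case: a => [a|] //=; case: b => [b|] //=; last by rewrite orbF.
by rewrite geq_min.
Qed.

Lemma trop_leq_inj (a b : trop) :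
  (forall v, trop_leq a v = trop_leq b v) -> a = b.
Proof.
case: a => [a|]; case: b => [b|] //= eq_ab; last first.
- by have := eq_ab b; rewrite leqnn.
- by have := eq_ab a; rewrite leqnn.
have := eq_ab a; have := eq_ab b; rewrite !leqnn => ab ba.
by congr Some; apply/eqP; rewrite eqn_leq ab -ba.
Qed.

Definition sublevel (I : finType) (x : {ffun I -> trop}) (v : nat) : {set I} :=
  [set i | trop_leq (x i) v].

Lemma sublevel_inj (I : finType) (x y : {ffun I -> trop}) :
  (forall v, sublevel x v = sublevel y v) -> x = y.
Proof.
move=> eq_xy; apply/ffunP => i; apply: trop_leq_inj => v.
by have /setP/(_ i) := eq_xy v; rewrite !inE.
Qed.

Lemma card_sublevel (N D : nat) (x : {ffun 'I_N -> trop}) (v : nat) :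
  at_most_finite D x -> #|sublevel x v| <= D.
Proof.
apply: leq_trans; apply: subset_leq_card.
by apply/subsetP => i; rewrite !inE; case: (x i).
Qed.

Lemma trop_leq_design_tmatvec (T N : nat) (F : 'I_N -> {set 'I_T})
    (x : {ffun 'I_N -> trop}) (t : 'I_T) (v : nat) :
  trop_leq (tmatvec (design_matrix F) x t) v =
  [exists j, (t \in F j) && trop_leq (x j) v].
Proof.
rewrite /tmatvec ffunE.
rewrite (big_morph (trop_leq^~ v) (fun a b => trop_leq_plus a b v) (erefl : trop_leq None v = false)).
rewrite big_orE; apply: eq_existsb => j.
by rewrite /design_matrix; case: (t \in F j); case: (x j).
Qed.

Lemma sublevel_design_tmatvec (T N : nat) (F : 'I_N -> {set 'I_T})
    (x : {ffun 'I_N -> trop}) (v : nat) :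
  sublevel (tmatvec (design_matrix F) x) v = \bigcup_(j in sublevel x v) F j.
Proof.
apply/setP => t; rewrite inE trop_leq_design_tmatvec.
apply/existsP/bigcupP => [[j /andP[tFj xj]]|[j]]; first by exists j; rewrite ?inE.
by rewrite inE => xj tFj; exists j; rewrite tFj.
Qed.

Lemma design_matrix_delay0 (T N : nat) (F : 'I_N -> {set 'I_T}) :
  within_delay 0 (design_matrix F).
Proof. by move=> t j; rewrite /design_matrix; case: (t \in F j). Qed.

Theorem mainTheorem11 (T N D : nat) (F : 'I_N -> {set 'I_T}) :
  1 <= D -> separable D F ->
  tropical_code D (design_matrix F) /\ within_delay 0 (design_matrix F).
Proof.
move=> _ sepF; split; last exact: design_matrix_delay0.
move=> x y finx finy neq_xy eq_Sxy; apply: neq_xy; apply: sublevel_inj => v.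
apply/eqP; apply: contraTT isT => neq_lv.
have := sepF _ _ (card_sublevel v finx) (card_sublevel v finy) neq_lv.
by rewrite -!sublevel_design_tmatvec eq_Sxy eqxx.
Qed.
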